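(* Let $S$ be a semilattice. Then the Banach algebra $\ell^1(S)$ is AMNM.
   Context: A semilattice is a commutative semigroup in which every element is idempotent. $\ell^1(S)$ is the Banach space of functions $a:S\to\mathbb C$ with $\|a\|=\sum_{s\in S}|a(s)|<\infty$, made into a Banach algebra by convolution, i.e. the bilinear extension of $\delta_x*\delta_y=\delta_{xy}$. For Banach algebras $A,B$ and a bounded linear map $T:A\to B$, the multiplicative defect is $\operatorname{def}(T)=\sup\{\|T(xy)-T(x)T(y)\|:\ x,y\in A,\ \|x\|\le1,\ \|y\|\le1\}$. $\operatorname{Mult}(A,B)$ denotes the set of bounded linear multiplicative maps $A\to B$ (including the zero map). A Banach algebra $A$ is called AMNM if for every $\varepsilon>0$ there is $\delta>0$ such that every $\psi\in A^*$ with $\operatorname{def}(\psi)\le\delta$ satisfies $\operatorname{dist}_{A^*}(\psi,\operatorname{Mult}(A,\mathbb C))\le\varepsilon$. *)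

From Stdlib Require Import Reals List ClassicalEpsilon.
Open Scope R_scope.

Record C : Type := mkC { re : R ; im : R }.
Definition C0 : C := mkC 0 0.
Definition Cadd (z w : C) : C := mkC (re z + re w) (im z + im w).
Definition Csub (z w : C) : C := mkC (re z - re w) (im z - im w).
Definition Cmul (z w : C) : C :=
  mkC (re z * re w - im z * im w) (re z * im w + im z * re w).
Definition Cmod (z : C) : R := sqrt (re z * re z + im z * im z).

Definition lsum {I : Type} (f : I -> C) (l : list I) : C :=
  fold_right (fun i acc => Cadd (f i) acc) C0 l.
Definition lsumR {I : Type} (f : I -> R) (l : list I) : R :=
  fold_right (fun i acc => f i + acc) 0 l.

(** Unordered summation of a family [f] indexed by [{i : I | P i}]:
    [v] is the limit of the net of finite partial sums. *)
Definition has_sum {I : Type} (P : I -> Prop) (f : I -> C) (v : C) : Prop :=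
  forall eps, 0 < eps ->
    exists F0 : list I, Forall P F0 /\
      forall F : list I, NoDup F -> Forall P F -> incl F0 F ->
        Cmod (Csub (lsum f F) v) <= eps.

Definition is_semilattice {S : Type} (op : S -> S -> S) : Prop :=
  (forall x y z, op x (op y z) = op (op x y) z) /\
  (forall x y, op x y = op y x) /\
  (forall x, op x x = x).

Definition l1_le {S : Type} (a : S -> C) (r : R) : Prop :=
  forall F : list S, NoDup F -> lsumR (fun s => Cmod (a s)) F <= r.
Definition in_l1 {S : Type} (a : S -> C) : Prop := exists r, l1_le a r.

Definition fadd {S : Type} (a b : S -> C) : S -> C := fun s => Cadd (a s) (b s).
Definition fscale {S : Type} (z : C) (a : S -> C) : S -> C := fun s => Cmul z (a s).

(** Convolution: (a * b)(s) = sum_{(x,y) : x y = s} a(x) b(y)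
    (the bilinear extension of delta_x * delta_y = delta_{xy}). *)
Definition conv {S : Type} (op : S -> S -> S) (a b : S -> C) : S -> C :=
  fun s => epsilon (inhabits C0)
    (fun v => has_sum (fun p : S * S => op (fst p) (snd p) = s)
                      (fun p => Cmul (a (fst p)) (b (snd p))) v).

(** * Functionals on ell^1(S) (only their values on ell^1(S) matter) *)
Definition is_linear_l1 {S : Type} (psi : (S -> C) -> C) : Prop :=
  (forall a b, in_l1 a -> in_l1 b -> psi (fadd a b) = Cadd (psi a) (psi b)) /\
  (forall z a, in_l1 a -> psi (fscale z a) = Cmul z (psi a)).

Definition is_bounded_l1 {S : Type} (psi : (S -> C) -> C) : Prop :=
  exists M, forall a, l1_le a 1 -> Cmod (psi a) <= M.

Definition in_dual {S : Type} (psi : (S -> C) -> C) : Prop :=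
  is_linear_l1 psi /\ is_bounded_l1 psi.

(** Mult(ell^1(S), C): bounded linear multiplicative functionals (incl. 0) *)
Definition is_mult {S : Type} (op : S -> S -> S) (phi : (S -> C) -> C) : Prop :=
  in_dual phi /\
  forall a b, in_l1 a -> in_l1 b -> phi (conv op a b) = Cmul (phi a) (phi b).

Definition defect_le {S : Type} (op : S -> S -> S) (psi : (S -> C) -> C) (delta : R) : Prop :=
  forall a b, l1_le a 1 -> l1_le b 1 ->
    Cmod (Csub (psi (conv op a b)) (Cmul (psi a) (psi b))) <= delta.

Definition dual_dist_le {S : Type} (psi phi : (S -> C) -> C) (c : R) : Prop :=
  forall a, l1_le a 1 -> Cmod (Csub (psi a) (phi a)) <= c.

Definition dist_mult_le {S : Type} (op : S -> S -> S) (psi : (S -> C) -> C) (eps : R) : Prop :=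
  forall eta, 0 < eta -> exists phi, is_mult op phi /\ dual_dist_le psi phi (eps + eta).

Definition l1_AMNM {S : Type} (op : S -> S -> S) : Prop :=
  forall eps, 0 < eps -> exists delta, 0 < delta /\
    forall psi, in_dual psi -> defect_le op psi delta -> dist_mult_le op psi eps.

(* Let psi be a bounded functional on ell^1(S) of defect at most d.  Its values on point
   masses, t(x) = psi(delta_x), satisfy |t(xy) - t(x) t(y)| <= d because
   delta_x * delta_y = delta_(xy).  As every x is idempotent, each t(x) is a nearly
   idempotent complex number, hence (for d <= 1/20) within 2d of 0 or of 1.  Rounding t
   to {0,1} yields a semicharacter chi: a product of nearly idempotent numbers is near 1
   exactly when both factors are.  chi defines the multiplicative functional
   phi(a) = sum_s chi(s) a(s), and phi is close to psi on the unit ball because two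
   bounded functionals that are close on point masses are close on finitely supported
   elements, which approximate every element of ell^1(S). *)

From Pilot Require Import Defs.
From Stdlib Require Import Reals List ClassicalEpsilon.
From Stdlib Require Import Lra Psatz FunctionalExtensionality Classical.
From Coquelicot Require Complex.
(* Re-import so that [C] denotes the complex numbers of Defs, not [Rfunctions.C]. *)
Import Defs.
Open Scope R_scope.

Lemma C_ext (z w : C) : re z = re w -> im z = im w -> z = w.
Proof. destruct z, w; simpl; intros; subst; reflexivity. Qed.

Ltac C_ring := apply C_ext; cbn; ring.

Definition Cone : C := mkC 1 0.

Definition toC (z : C) : Complex.C := (re z, im z).

Lemma Cmod_toC (z : C) : Cmod z = Complex.Cmod (toC z).
Proof. unfold Cmod, Complex.Cmod, toC; simpl; f_equal; ring. Qed.

Lemma Cmod_ge0 (z : C) : 0 <= Cmod z.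
Proof. rewrite Cmod_toC; apply Complex.Cmod_ge_0. Qed.

Lemma Cmod_add (z w : C) : Cmod (Cadd z w) <= Cmod z + Cmod w.
Proof. rewrite !Cmod_toC; apply (Complex.Cmod_triangle (toC z) (toC w)). Qed.

Lemma Cmod_mul (z w : C) : Cmod (Cmul z w) = Cmod z * Cmod w.
Proof. rewrite !Cmod_toC; apply (Complex.Cmod_mult (toC z) (toC w)). Qed.

Lemma Cmod_re (z : C) : Rabs (re z) <= Cmod z.
Proof. rewrite Cmod_toC; apply (Complex.re_le_Cmod (toC z)). Qed.

Lemma Cmod_im (z : C) : Rabs (im z) <= Cmod z.
Proof.
  replace (Cmod z) with (Cmod (mkC (im z) (re z))) by (unfold Cmod; simpl; f_equal; ring).
  apply (Cmod_re (mkC (im z) (re z))).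
Qed.

Lemma Cmod_real (r : R) : Cmod (mkC r 0) = Rabs r.
Proof.
  unfold Cmod; simpl. replace (r * r + 0 * 0) with (r²) by (unfold Rsqr; ring).
  apply sqrt_Rsqr_abs.
Qed.

Lemma Cmod_imag (r : R) : Cmod (mkC 0 r) = Rabs r.
Proof.
  unfold Cmod; simpl. replace (0 * 0 + r * r) with (r²) by (unfold Rsqr; ring).
  apply sqrt_Rsqr_abs.
Qed.

Lemma Cmod_le_reim (z : C) : Cmod z <= Rabs (re z) + Rabs (im z).
Proof.
  replace z with (Cadd (mkC (re z) 0) (mkC 0 (im z))) at 1 by C_ring.
  rewrite <- Cmod_real, <- Cmod_imag. apply Cmod_add.
Qed.

Lemma Cmod_C0 : Cmod C0 = 0.
Proof. unfold C0; rewrite Cmod_real; apply Rabs_R0. Qed.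

Lemma Cmod_Cone : Cmod Cone = 1.
Proof. unfold Cone; rewrite Cmod_real; apply Rabs_R1. Qed.

Lemma Cmod_sub_sym (z w : C) : Cmod (Csub z w) = Cmod (Csub w z).
Proof. unfold Cmod, Csub; simpl; f_equal; ring. Qed.

Lemma Cmod_sub_tri (z w u : C) : Cmod (Csub z u) <= Cmod (Csub z w) + Cmod (Csub w u).
Proof. replace (Csub z u) with (Cadd (Csub z w) (Csub w u)) by C_ring; apply Cmod_add. Qed.

Lemma Cmod_sub_le (z w : C) : Cmod (Csub z w) <= Cmod z + Cmod w.
Proof.
  pose proof (Cmod_sub_tri z C0 w) as H. rewrite (Cmod_sub_sym C0 w) in H.
  replace (Csub z C0) with z in H by C_ring. replace (Csub w C0) with w in H by C_ring.
  exact H.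
Qed.

Lemma Cmod_le_via (z w : C) : Cmod z <= Cmod (Csub z w) + Cmod w.
Proof.
  pose proof (Cmod_sub_tri z w C0) as H.
  replace (Csub z C0) with z in H by C_ring. replace (Csub w C0) with w in H by C_ring.
  exact H.
Qed.

Lemma Cmod_eq0 (z : C) : Cmod z = 0 -> z = C0.
Proof.
  intros H. pose proof (Cmod_re z). pose proof (Cmod_im z).
  pose proof (Rle_abs (re z)). pose proof (Rle_abs (- re z)).
  pose proof (Rle_abs (im z)). pose proof (Rle_abs (- im z)).
  rewrite Rabs_Ropp in *. apply C_ext; cbn; lra.
Qed.

Definition deq {T : Type} : forall x y : T, {x = y} + {x <> y} :=
  fun x y => excluded_middle_informative (x = y).

Section ListSums.
Context {I : Type}.

Lemma lsum_app (f : I -> C) l1 l2 : lsum f (l1 ++ l2) = Cadd (lsum f l1) (lsum f l2).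
Proof. induction l1; simpl; [|rewrite IHl1]; C_ring. Qed.

Lemma lsumR_app (f : I -> R) l1 l2 : lsumR f (l1 ++ l2) = lsumR f l1 + lsumR f l2.
Proof. induction l1; simpl; [|rewrite IHl1]; ring. Qed.

Lemma lsum_re (f : I -> C) l : re (lsum f l) = lsumR (fun i => re (f i)) l.
Proof. induction l; simpl; [|rewrite IHl]; reflexivity. Qed.

Lemma lsum_im (f : I -> C) l : im (lsum f l) = lsumR (fun i => im (f i)) l.
Proof. induction l; simpl; [|rewrite IHl]; reflexivity. Qed.

Lemma lsum_Cmod (f : I -> C) l : Cmod (lsum f l) <= lsumR (fun i => Cmod (f i)) l.
Proof.
  induction l; simpl; [rewrite Cmod_C0; lra|].
  eapply Rle_trans; [apply Cmod_add|lra].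
Qed.

Lemma lsumR_nonneg (f : I -> R) l : (forall i, 0 <= f i) -> 0 <= lsumR f l.
Proof. intros H; induction l; simpl; [lra|]. pose proof (H a); lra. Qed.

Lemma lsumR_ext (f g : I -> R) l : (forall i, In i l -> f i = g i) -> lsumR f l = lsumR g l.
Proof. induction l; simpl; intros H; auto. rewrite H, IHl; auto. Qed.

Lemma lsum_ext (f g : I -> C) l : (forall i, In i l -> f i = g i) -> lsum f l = lsum g l.
Proof. induction l; simpl; intros H; auto. rewrite H, IHl; auto. Qed.

Lemma lsumR_le (f g : I -> R) l : (forall i, f i <= g i) -> lsumR f l <= lsumR g l.
Proof. intros H; induction l; simpl; [lra|]. pose proof (H a); lra. Qed.

Lemma lsumR_plus (f g : I -> R) l : lsumR (fun i => f i + g i) l = lsumR f l + lsumR g l.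
Proof. induction l; simpl; [|rewrite IHl]; ring. Qed.

Lemma lsumR_scal (c : R) (f : I -> R) l : lsumR (fun i => c * f i) l = c * lsumR f l.
Proof. induction l; simpl; [|rewrite IHl]; ring. Qed.

Lemma lsum_add (f g : I -> C) l :
  lsum (fun i => Cadd (f i) (g i)) l = Cadd (lsum f l) (lsum g l).
Proof. induction l; simpl; [|rewrite IHl]; C_ring. Qed.

Lemma lsum_sub (f g : I -> C) l :
  lsum (fun i => Csub (f i) (g i)) l = Csub (lsum f l) (lsum g l).
Proof. induction l; simpl; [|rewrite IHl]; C_ring. Qed.

Lemma lsum_scal (c : C) (f : I -> C) l : lsum (fun i => Cmul c (f i)) l = Cmul c (lsum f l).
Proof. induction l; simpl; [|rewrite IHl]; C_ring. Qed.

Lemma lsumR_incl (f : I -> R) G H :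
  (forall i, 0 <= f i) -> NoDup G -> incl G H -> lsumR f G <= lsumR f H.
Proof.
  intros Hf HG. revert H. induction HG as [|x G Hx HG IH]; intros H Hi; simpl.
  - apply lsumR_nonneg; auto.
  - destruct (in_split x H (Hi x (or_introl eq_refl))) as [H1 [H2 ->]].
    assert (Hs : lsumR f G <= lsumR f (H1 ++ H2)).
    { apply IH. intros y Hy.
      destruct (in_app_or _ _ _ (Hi y (or_intror Hy))) as [H0|[H0|H0]];
        apply in_or_app; auto.
      subst; contradiction. }
    rewrite lsumR_app in Hs |- *; simpl; lra.
Qed.

Lemma lsumR_filter (f : I -> R) (p : I -> bool) G :
  (forall i, p i = false -> f i = 0) -> lsumR f G = lsumR f (filter p G).
Proof.
  intros H; induction G; simpl; auto.
  destruct (p a) eqn:E; simpl; rewrite IHG; auto. rewrite H; auto; ring.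
Qed.

End ListSums.

Lemma lsumR_map {A B : Type} (f : B -> R) (g : A -> B) l :
  lsumR f (map g l) = lsumR (fun a => f (g a)) l.
Proof. induction l; simpl; [|rewrite IHl]; reflexivity. Qed.

Lemma lsum_map {A B : Type} (f : B -> C) (g : A -> B) l :
  lsum f (map g l) = lsum (fun a => f (g a)) l.
Proof. induction l; simpl; [|rewrite IHl]; reflexivity. Qed.

Lemma lsumR_prod {A B : Type} (f : A -> R) (g : B -> R) la lb :
  lsumR (fun p => f (fst p) * g (snd p)) (list_prod la lb) = lsumR f la * lsumR g lb.
Proof.
  induction la; simpl; [ring|].
  rewrite lsumR_app, IHla, lsumR_map; simpl. rewrite (lsumR_scal (f a) g); ring.
Qed.

(** * Unordered sums *)
Section UnorderedSums.
Context {I : Type}.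

Definition hasR (P : I -> Prop) (f : I -> R) (v : R) : Prop :=
  forall eps, 0 < eps -> exists F0 : list I, Forall P F0 /\
    forall F, NoDup F -> Forall P F -> incl F0 F -> Rabs (lsumR f F - v) <= eps.

Definition abs_sums_le (P : I -> Prop) (f : I -> C) (M : R) : Prop :=
  forall F, NoDup F -> Forall P F -> lsumR (fun i => Cmod (f i)) F <= M.

Lemma partial_sums_sup (P : I -> Prop) (f : I -> R) (M : R) :
  (forall F, NoDup F -> Forall P F -> lsumR f F <= M) ->
  exists m, (forall F, NoDup F -> Forall P F -> lsumR f F <= m) /\
    forall eps, 0 < eps -> exists F0, NoDup F0 /\ Forall P F0 /\ m - eps < lsumR f F0.
Proof.
  intros HM.
  set (E := fun r => exists F, NoDup F /\ Forall P F /\ r = lsumR f F).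
  destruct (completeness E) as [m [Hub Hlub]].
  { exists M; intros r [F [H1 [H2 ->]]]; auto. }
  { exists 0, nil; repeat constructor. }
  exists m; split.
  - intros F H1 H2; apply Hub; exists F; auto.
  - intros eps Heps. apply NNPP; intros Hn.
    assert (m <= m - eps); [|lra].
    apply Hlub; intros r [F [H1 [H2 ->]]].
    apply Rnot_lt_le; intros Hlt; apply Hn; eauto.
Qed.

Lemma hasR_nonneg (P : I -> Prop) (f : I -> R) (M : R) :
  (forall i, 0 <= f i) -> (forall F, NoDup F -> Forall P F -> lsumR f F <= M) ->
  exists v, hasR P f v.
Proof.
  intros Hf HM. destruct (partial_sums_sup P f M HM) as [m [Hub Happrox]].
  exists m; intros eps Heps.
  destruct (Happrox eps Heps) as [F0 [H1 [H2 H3]]].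
  exists F0; split; auto. intros F HF HPF Hinc.
  pose proof (lsumR_incl f F0 F Hf H1 Hinc). pose proof (Hub F HF HPF).
  apply Rabs_le; lra.
Qed.

Lemma hasR_lin (P : I -> Prop) (f g : I -> R) (a b va vb : R) :
  hasR P f va -> hasR P g vb -> hasR P (fun i => a * f i + b * g i) (a * va + b * vb).
Proof.
  intros Hf Hg eps Heps.
  pose proof (Rabs_pos a). pose proof (Rabs_pos b).
  set (e := eps / (Rabs a + Rabs b + 1)).
  assert (He : 0 < e) by (apply Rdiv_lt_0_compat; lra).
  assert (Hae : (Rabs a + Rabs b) * e <= eps).
  { apply (Rmult_le_reg_r (Rabs a + Rabs b + 1)); [lra|].
    unfold e; field_simplify; nra. }
  destruct (Hf e He) as [F1 [HP1 H1]]. destruct (Hg e He) as [F2 [HP2 H2]].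
  exists (F1 ++ F2). split; [apply Forall_app; auto|].
  intros F HF HPF Hinc.
  assert (A1 := H1 F HF HPF (fun x h => Hinc x (in_or_app _ _ _ (or_introl h)))).
  assert (A2 := H2 F HF HPF (fun x h => Hinc x (in_or_app _ _ _ (or_intror h)))).
  rewrite lsumR_plus, !lsumR_scal.
  replace (a * lsumR f F + b * lsumR g F - (a * va + b * vb)) with
    (a * (lsumR f F - va) + b * (lsumR g F - vb)) by ring.
  eapply Rle_trans; [apply Rabs_triang|]. rewrite !Rabs_mult.
  pose proof (Rmult_le_compat_l _ _ _ (Rabs_pos a) A1).
  pose proof (Rmult_le_compat_l _ _ _ (Rabs_pos b) A2).
  lra.
Qed.

Lemma hasR_ext (P : I -> Prop) (f g : I -> R) (v : R) :
  (forall i, P i -> f i = g i) -> hasR P f v -> hasR P g v.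
Proof.
  intros Hfg H eps Heps. destruct (H eps Heps) as [F0 [HP HF]]. exists F0; split; auto.
  intros F H1 H2 H3. rewrite <- (lsumR_ext f g); auto.
  intros i Hi; apply Hfg; rewrite Forall_forall in H2; auto.
Qed.

(* A real family with bounded absolute partial sums is summable: split it into its
   positive and negative parts. *)
Lemma hasR_abs (P : I -> Prop) (f : I -> R) (M : R) :
  (forall F, NoDup F -> Forall P F -> lsumR (fun i => Rabs (f i)) F <= M) ->
  exists v, hasR P f v.
Proof.
  intros HM.
  assert (Hpart : forall s, (s = 1 \/ s = -1) ->
            exists v, hasR P (fun i => (Rabs (f i) + s * f i) / 2) v).
  { intros s Hs. apply (hasR_nonneg P _ M).
    - intros i. pose proof (Rle_abs (f i)). pose proof (Rle_abs (- f i)).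
      rewrite Rabs_Ropp in *. destruct Hs; subst; lra.
    - intros F HF HPF. eapply Rle_trans; [|apply (HM F HF HPF)]. apply lsumR_le.
      intros i. pose proof (Rle_abs (f i)). pose proof (Rle_abs (- f i)).
      rewrite Rabs_Ropp in *. destruct Hs; subst; lra. }
  destruct (Hpart 1 (or_introl eq_refl)) as [v1 H1].
  destruct (Hpart (-1) (or_intror eq_refl)) as [v2 H2].
  exists (1 * v1 + (-1) * v2).
  eapply hasR_ext; [|apply (hasR_lin _ _ _ 1 (-1) _ _ H1 H2)].
  intros i _; simpl; field.
Qed.

Lemma has_sum_of_reim (P : I -> Prop) (f : I -> C) (v : C) :
  hasR P (fun i => re (f i)) (re v) -> hasR P (fun i => im (f i)) (im v) -> has_sum P f v.
Proof.
  intros Hr Hi eps Heps.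
  destruct (Hr (eps/2)) as [F1 [HP1 H1]]; [lra|].
  destruct (Hi (eps/2)) as [F2 [HP2 H2]]; [lra|].
  exists (F1 ++ F2). split; [apply Forall_app; auto|].
  intros F HF HPF Hinc.
  assert (A1 := H1 F HF HPF (fun x h => Hinc x (in_or_app _ _ _ (or_introl h)))).
  assert (A2 := H2 F HF HPF (fun x h => Hinc x (in_or_app _ _ _ (or_intror h)))).
  eapply Rle_trans; [apply Cmod_le_reim|]. simpl. rewrite lsum_re, lsum_im. lra.
Qed.

Lemma has_sum_exists (P : I -> Prop) (f : I -> C) (M : R) :
  abs_sums_le P f M -> exists v, has_sum P f v.
Proof.
  intros H.
  destruct (hasR_abs P (fun i => re (f i)) M) as [v1 H1].
  { intros F HF HPF. eapply Rle_trans; [|apply (H F HF HPF)].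
    apply lsumR_le; intros; apply Cmod_re. }
  destruct (hasR_abs P (fun i => im (f i)) M) as [v2 H2].
  { intros F HF HPF. eapply Rle_trans; [|apply (H F HF HPF)].
    apply lsumR_le; intros; apply Cmod_im. }
  exists (mkC v1 v2). apply has_sum_of_reim; auto.
Qed.

Lemma common_refinement (P : I -> Prop) (F1 F2 : list I) :
  Forall P F1 -> Forall P F2 ->
  exists F, NoDup F /\ Forall P F /\ incl F1 F /\ incl F2 F.
Proof.
  intros HP1 HP2. exists (nodup deq (F1 ++ F2)).
  split; [apply NoDup_nodup|]. split; [|split].
  - apply Forall_forall; intros x Hx. apply nodup_In, in_app_or in Hx.
    rewrite Forall_forall in HP1, HP2. destruct Hx; auto.
  - intros x Hx; apply nodup_In, in_or_app; auto.
  - intros x Hx; apply nodup_In, in_or_app; auto.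
Qed.

Lemma has_sum_unique (P : I -> Prop) (f : I -> C) (v w : C) :
  has_sum P f v -> has_sum P f w -> v = w.
Proof.
  intros Hv Hw.
  assert (Hsmall : forall eps, 0 < eps -> Cmod (Csub v w) <= eps).
  { intros eps Heps.
    destruct (Hv (eps/2)) as [F1 [HP1 H1]]; [lra|].
    destruct (Hw (eps/2)) as [F2 [HP2 H2]]; [lra|].
    destruct (common_refinement P F1 F2 HP1 HP2) as [F [HF [HPF [I1 I2]]]].
    specialize (H1 F HF HPF I1). specialize (H2 F HF HPF I2).
    rewrite Cmod_sub_sym in H1. pose proof (Cmod_sub_tri v (lsum f F) w). lra. }
  assert (Cmod (Csub v w) = 0).
  { apply Rle_antisym; [|apply Cmod_ge0]. apply Rnot_lt_le; intros Hc.
    specialize (Hsmall (Cmod (Csub v w) / 2)). lra. }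
  apply Cmod_eq0 in H.
  apply C_ext; [apply (f_equal re) in H|apply (f_equal im) in H]; simpl in H; lra.
Qed.

Lemma has_sum_ext (P : I -> Prop) (f g : I -> C) (v : C) :
  (forall i, P i -> f i = g i) -> has_sum P f v -> has_sum P g v.
Proof.
  intros Hfg H eps Heps. destruct (H eps Heps) as [F0 [HP HF]]. exists F0; split; auto.
  intros F H1 H2 H3. rewrite <- (lsum_ext f g); auto.
  intros i Hi; apply Hfg; rewrite Forall_forall in H2; auto.
Qed.

Lemma has_sum_scal (P : I -> Prop) (f : I -> C) (v c : C) :
  has_sum P f v -> has_sum P (fun i => Cmul c (f i)) (Cmul c v).
Proof.
  intros H eps Heps. pose proof (Cmod_ge0 c).
  destruct (H (eps / (Cmod c + 1))) as [F0 [HP HF]]; [apply Rdiv_lt_0_compat; lra|].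
  exists F0; split; auto. intros F H1 H2 H3. specialize (HF F H1 H2 H3).
  rewrite lsum_scal.
  replace (Csub (Cmul c (lsum f F)) (Cmul c v)) with (Cmul c (Csub (lsum f F) v)) by C_ring.
  rewrite Cmod_mul. pose proof (Cmod_ge0 (Csub (lsum f F) v)).
  apply Rle_trans with ((Cmod c + 1) * (eps / (Cmod c + 1))); [nra|right; field; lra].
Qed.

Lemma has_sum_add (P : I -> Prop) (f g : I -> C) (v w : C) :
  has_sum P f v -> has_sum P g w -> has_sum P (fun i => Cadd (f i) (g i)) (Cadd v w).
Proof.
  intros Hf Hg eps Heps.
  destruct (Hf (eps/2)) as [F1 [HP1 H1]]; [lra|].
  destruct (Hg (eps/2)) as [F2 [HP2 H2]]; [lra|].
  exists (F1 ++ F2). split; [apply Forall_app; auto|].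
  intros F HF HPF Hinc.
  assert (A1 := H1 F HF HPF (fun x h => Hinc x (in_or_app _ _ _ (or_introl h)))).
  assert (A2 := H2 F HF HPF (fun x h => Hinc x (in_or_app _ _ _ (or_intror h)))).
  rewrite lsum_add.
  replace (Csub (Cadd (lsum f F) (lsum g F)) (Cadd v w)) with
    (Cadd (Csub (lsum f F) v) (Csub (lsum g F) w)) by C_ring.
  eapply Rle_trans; [apply Cmod_add|lra].
Qed.

Lemma has_sum_bound (P : I -> Prop) (f : I -> C) (v : C) (M : R) :
  has_sum P f v -> abs_sums_le P f M -> Cmod v <= M.
Proof.
  intros H HM. apply Rnot_lt_le; intros Hc.
  destruct (H ((Cmod v - M) / 2)) as [F0 [HP HF]]; [lra|].
  destruct (common_refinement P F0 nil HP (Forall_nil P)) as [F [HFn [HPF [Hinc _]]]].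
  specialize (HF F HFn HPF Hinc). specialize (HM F HFn HPF).
  pose proof (lsum_Cmod f F). pose proof (Cmod_le_via v (lsum f F)).
  rewrite Cmod_sub_sym in HF. lra.
Qed.

Lemma epsilon_has_sum (P : I -> Prop) (f : I -> C) (v : C) :
  has_sum P f v -> epsilon (inhabits C0) (fun v => has_sum P f v) = v.
Proof.
  intros H. apply (has_sum_unique P f); [|exact H].
  apply (epsilon_spec (inhabits C0) (fun v => has_sum P f v)); eauto.
Qed.

End UnorderedSums.

Lemma Forall_True {I : Type} (l : list I) : Forall (fun _ => True) l.
Proof. apply Forall_forall; auto. Qed.

(** * Regrouping a sum along the fibres of a map *)
Section Regrouping.
Context {I J : Type} (k : I -> J) (h : I -> C) (g : J -> C).
Hypothesis fibre_sums : forall j, has_sum (fun i => k i = j) h (g j).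

Lemma fibres_approx (F1 : list I) (e : R) (G : list J) :
  0 < e -> NoDup G -> exists E, NoDup E /\
    (forall i, In i E -> In (k i) G) /\ (forall i, In i F1 -> In (k i) G -> In i E) /\
    Cmod (Csub (lsum g G) (lsum h E)) <= e * INR (length G).
Proof.
  intros He HG. induction HG as [|j G Hj HG IH].
  - exists nil. split; [constructor|]. split; [intros i []|]. split; [intros i _ []|].
    simpl. replace (Csub C0 C0) with C0 by C_ring. rewrite Cmod_C0; lra.
  - destruct IH as [E' [HE'nd [HE'over [HE'F1 HE'sum]]]].
    destruct (fibre_sums j e He) as [F0 [HP0 H0]].
    set (Ej := nodup deq (F0 ++ filter (fun i => if deq (k i) j then true else false) F1)).
    assert (HEj : forall i, In i Ej -> k i = j).
    { intros i Hi. apply nodup_In, in_app_or in Hi. destruct Hi as [Hi|Hi].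
      - rewrite Forall_forall in HP0; auto.
      - apply filter_In in Hi. destruct Hi as [_ Hi]. destruct (deq (k i) j); congruence. }
    assert (HEjsum : Cmod (Csub (lsum h Ej) (g j)) <= e).
    { apply H0; [apply NoDup_nodup|apply Forall_forall; auto|].
      intros i Hi. apply nodup_In, in_or_app; auto. }
    exists (Ej ++ E'). split; [|split; [|split]].
    + apply NoDup_app; [apply NoDup_nodup|auto|].
      intros i Hi Hi'. apply HE'over in Hi'. rewrite (HEj i Hi) in Hi'. contradiction.
    + intros i Hi. apply in_app_or in Hi. destruct Hi as [Hi|Hi].
      * left; symmetry; auto.
      * right; auto.
    + intros i Hi [Hk|Hk]; apply in_or_app.
      * left. apply nodup_In, in_or_app. right. apply filter_In. split; auto.
        destruct (deq (k i) j); congruence.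
      * right; auto.
    + simpl length. rewrite S_INR. simpl lsum. rewrite lsum_app.
      replace (Csub (Cadd (g j) (lsum g G)) (Cadd (lsum h Ej) (lsum h E'))) with
        (Cadd (Csub (g j) (lsum h Ej)) (Csub (lsum g G) (lsum h E'))) by C_ring.
      eapply Rle_trans; [apply Cmod_add|]. rewrite Cmod_sub_sym. lra.
Qed.

Lemma has_sum_regroup (T : C) :
  has_sum (fun _ => True) h T -> has_sum (fun _ => True) g T.
Proof.
  intros HT eps Heps.
  destruct (HT (eps/2)) as [F1 [_ H1]]; [lra|].
  exists (map k F1). split; [apply Forall_True|].
  intros G HG _ Hinc.
  pose proof (pos_INR (length G)).
  set (e := eps / 2 / (INR (length G) + 1)).
  assert (He : 0 < e) by (apply Rdiv_lt_0_compat; lra).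
  assert (Hle : e * INR (length G) <= eps / 2).
  { assert (e * (INR (length G) + 1) = eps / 2) by (unfold e; field; lra). nra. }
  destruct (fibres_approx F1 e G He HG) as [E [HE [_ [HF1 HEsum]]]].
  assert (A := H1 E HE (Forall_True E) (fun i h => HF1 i h (Hinc _ (in_map _ _ _ h)))).
  eapply Rle_trans; [apply (Cmod_sub_tri _ (lsum h E))|]. lra.
Qed.

End Regrouping.

Lemma abs_sums_le_pair {A B : Type} (P : A * B -> Prop) (u : A -> C) (w : B -> C)
  (Mu Mw : R) :
  abs_sums_le (fun _ => True) u Mu -> abs_sums_le (fun _ => True) w Mw ->
  abs_sums_le P (fun p => Cmul (u (fst p)) (w (snd p))) (Mu * Mw).
Proof.
  intros Hu Hw F HF _.
  set (la := nodup deq (map fst F)). set (lb := nodup deq (map snd F)).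
  pose proof (Hu la (NoDup_nodup _ _) (Forall_True _)).
  pose proof (Hw lb (NoDup_nodup _ _) (Forall_True _)).
  pose proof (lsumR_nonneg (fun a => Cmod (u a)) la (fun _ => Cmod_ge0 _)).
  pose proof (lsumR_nonneg (fun b => Cmod (w b)) lb (fun _ => Cmod_ge0 _)).
  eapply Rle_trans.
  - apply (lsumR_incl _ F (list_prod la lb)); [intros; apply Cmod_ge0|auto|].
    intros [x y] Hxy. apply in_prod; apply nodup_In.
    + change x with (fst (x, y)); apply in_map; auto.
    + change y with (snd (x, y)); apply in_map; auto.
  - rewrite (lsumR_ext _ (fun p => Cmod (u (fst p)) * Cmod (w (snd p))))
      by (intros; apply Cmod_mul).
    rewrite (lsumR_prod (fun a => Cmod (u a)) (fun b => Cmod (w b))).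
    apply Rmult_le_compat; auto.
Qed.

Lemma has_sum_slice {A B : Type} (x : A) (w : B -> C) (W : C) :
  has_sum (fun _ => True) w W ->
  has_sum (fun p : A * B => fst p = x) (fun p => w (snd p)) W.
Proof.
  intros H eps Heps. destruct (H eps Heps) as [F0 [_ H0]].
  exists (map (fun y => (x, y)) F0). split.
  { apply Forall_forall. intros p Hp. apply in_map_iff in Hp.
    destruct Hp as [y [<- _]]; reflexivity. }
  intros F HF HPF Hinc. rewrite Forall_forall in HPF.
  assert (HND : NoDup (map snd F)).
  { apply NoDup_map_NoDup_ForallPairs; auto.
    intros [p1 p2] [q1 q2] Hp Hq E. simpl in *.
    apply HPF in Hp. apply HPF in Hq. simpl in *; subst; reflexivity. }
  specialize (H0 (map snd F) HND (Forall_True _)).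
  rewrite lsum_map in H0. apply H0.
  intros y Hy. change y with (snd (x, y)). apply in_map, Hinc, in_map; auto.
Qed.

Lemma has_sum_prod {A B : Type} (u : A -> C) (w : B -> C) (U W : C) (Mu Mw : R) :
  abs_sums_le (fun _ => True) u Mu -> abs_sums_le (fun _ => True) w Mw ->
  has_sum (fun _ => True) u U -> has_sum (fun _ => True) w W ->
  has_sum (fun _ : A * B => True) (fun p => Cmul (u (fst p)) (w (snd p))) (Cmul U W).
Proof.
  intros Hu Hw HU HW.
  destruct (has_sum_exists (fun _ : A * B => True) _ _ (abs_sums_le_pair _ u w Mu Mw Hu Hw))
    as [T HT].
  assert (H1 : has_sum (fun _ => True) (fun x => Cmul (u x) W) T).
  { refine (has_sum_regroup fst _ _ _ T HT). intros x.
    eapply has_sum_ext; [|apply (has_sum_scal _ _ _ (u x) (has_sum_slice x w W HW))].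
    intros [a b] Hx. simpl in *; subst; reflexivity. }
  assert (H2 : has_sum (fun _ => True) (fun x => Cmul (u x) W) (Cmul U W)).
  { replace (Cmul U W) with (Cmul W U) by C_ring.
    eapply has_sum_ext; [|apply (has_sum_scal _ _ _ W HU)].
    intros; C_ring. }
  rewrite <- (has_sum_unique _ _ _ _ H1 H2); exact HT.
Qed.

Definition dirac {I : Type} (q : I) (c : C) : I -> C :=
  fun i => if deq i q then c else C0.

Lemma lsum_dirac_out {I : Type} (q : I) (c : C) F : ~ In q F -> lsum (dirac q c) F = C0.
Proof.
  induction F as [|a F IH]; simpl; intros Hq; auto.
  unfold dirac at 1. destruct (deq a q); [subst; tauto|]. rewrite IH by tauto. C_ring.
Qed.

Lemma lsum_dirac_in {I : Type} (q : I) (c : C) F :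
  NoDup F -> In q F -> lsum (dirac q c) F = c.
Proof.
  intros H; induction H as [|x F Hx H IH]; simpl; intros Hq; [contradiction|].
  unfold dirac at 1. destruct (deq x q) as [->|Hne].
  - rewrite lsum_dirac_out by auto. C_ring.
  - destruct Hq as [Hq|Hq]; [congruence|]. rewrite IH by auto. C_ring.
Qed.

Lemma has_sum_dirac_in {I : Type} (P : I -> Prop) (q : I) (c : C) :
  P q -> has_sum P (dirac q c) c.
Proof.
  intros Hq eps Heps. exists (q :: nil). split; [constructor; auto|].
  intros F HF _ Hinc. rewrite lsum_dirac_in by (auto; apply Hinc; left; auto).
  replace (Csub c c) with C0 by C_ring. rewrite Cmod_C0; lra.
Qed.

Lemma has_sum_dirac_out {I : Type} (P : I -> Prop) (q : I) (c : C) :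
  ~ P q -> has_sum P (dirac q c) C0.
Proof.
  intros Hq eps Heps. exists nil. split; [constructor|].
  intros F HF HP _. rewrite Forall_forall in HP.
  rewrite lsum_dirac_out by (intros Hin; apply Hq, HP, Hin).
  replace (Csub C0 C0) with C0 by C_ring. rewrite Cmod_C0; lra.
Qed.

Lemma l1_le_dirac {I : Type} (q : I) (c : C) : l1_le (dirac q c) (Cmod c).
Proof.
  intros F HF.
  enough (lsumR (fun s => Cmod (dirac q c s)) F <= Cmod c /\
          (~ In q F -> lsumR (fun s => Cmod (dirac q c s)) F = 0)) by tauto.
  induction HF as [|x F Hx HF [IH1 IH2]]; simpl.
  - pose proof (Cmod_ge0 c); split; lra.
  - unfold dirac at 1 3. destruct (deq x q) as [->|Hne].
    + rewrite IH2 by auto. split; [lra|tauto].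
    + rewrite Cmod_C0. split; [lra|intros Hn; rewrite IH2; [ring|tauto]].
Qed.

Lemma fscale_dirac {I : Type} (q : I) (c : C) : fscale c (dirac q Cone) = dirac q c.
Proof.
  apply functional_extensionality; intros i. unfold fscale, dirac.
  destruct (deq i q); C_ring.
Qed.

Lemma conv_dirac {S : Type} (op : S -> S -> S) (x y : S) :
  conv op (dirac x Cone) (dirac y Cone) = dirac (op x y) Cone.
Proof.
  apply functional_extensionality; intro s. unfold conv. apply epsilon_has_sum.
  apply (has_sum_ext _ (dirac (x, y) Cone)).
  { intros [p1 p2] _. unfold dirac; simpl.
    destruct (deq (p1, p2) (x, y)) as [E|E]; destruct (deq p1 x); destruct (deq p2 y);
      subst; try (inversion E; congruence); try congruence; C_ring. }
  unfold dirac at 2. destruct (deq s (op x y)) as [->|Hne].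
  - apply has_sum_dirac_in; reflexivity.
  - apply has_sum_dirac_out; simpl; auto.
Qed.

Lemma l1_le_zero {S : Type} (r : R) : 0 <= r -> l1_le (fun _ : S => C0) r.
Proof.
  intros Hr F _. rewrite (lsumR_ext _ (fun _ => 0)) by (intros; apply Cmod_C0).
  induction F; simpl; lra.
Qed.

Lemma l1_le_mono {S : Type} (a b : S -> C) (r : R) :
  (forall s, Cmod (b s) <= Cmod (a s)) -> l1_le a r -> l1_le b r.
Proof. intros Hab H F HF. eapply Rle_trans; [|apply (H F HF)]. apply lsumR_le; auto. Qed.

Lemma l1_tail_small {S : Type} (a : S -> C) (M r : R) :
  l1_le a M -> 0 < r -> exists F0, NoDup F0 /\
    forall G, NoDup G -> (forall s, In s G -> ~ In s F0) ->
      lsumR (fun s => Cmod (a s)) G <= r.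
Proof.
  intros Ha Hr.
  destruct (partial_sums_sup (fun _ => True) (fun s => Cmod (a s)) M) as [m [Hub Happrox]].
  { intros F HF _; apply Ha, HF. }
  destruct (Happrox r Hr) as [F0 [HF0 [_ Hm]]].
  exists F0; split; auto. intros G HG Hdis.
  assert (lsumR (fun s => Cmod (a s)) (F0 ++ G) <= m).
  { apply Hub; [|apply Forall_True].
    apply NoDup_app; auto. intros x Hx Hx'. apply (Hdis x Hx' Hx). }
  rewrite lsumR_app in H. lra.
Qed.

(** * Rounding near-idempotent complex numbers to 0 or 1 *)
Section NearIdempotents.
Variable d : R.
Hypothesis d_ge0 : 0 <= d.
Hypothesis d_small : d <= 1/20.

Definition near_idem (t : C) : Prop := Cmod (Csub t (Cmul t t)) <= d.

(* Since [t - t^2 = t (1 - t)], a nearly idempotent [t] is within [2d] of [1] if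
   [|t| >= 1/2], and within [2d] of [0] otherwise. *)
Lemma near_idem_dichotomy (t : C) : near_idem t ->
  (1/2 <= Cmod t -> Cmod (Csub t Cone) <= 2 * d) /\ (Cmod t < 1/2 -> Cmod t <= 2 * d).
Proof.
  unfold near_idem; intros H.
  replace (Csub t (Cmul t t)) with (Cmul t (Csub Cone t)) in H by C_ring.
  rewrite Cmod_mul, Cmod_sub_sym in H.
  pose proof (Cmod_le_via Cone t) as Hv. rewrite Cmod_Cone, Cmod_sub_sym in Hv.
  pose proof (Cmod_ge0 t). pose proof (Cmod_ge0 (Csub t Cone)).
  split; intros; nra.
Qed.

Lemma near_idem_bound (t : C) : near_idem t -> Cmod t <= 1 + 2 * d.
Proof.
  intros H. destruct (near_idem_dichotomy t H) as [H1 H2].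
  destruct (Rlt_le_dec (Cmod t) (1/2)) as [Hlt|Hge]; [specialize (H2 Hlt); lra|].
  pose proof (Cmod_le_via t Cone) as Hv. rewrite Cmod_Cone in Hv. specialize (H1 Hge). lra.
Qed.

Lemma near_idem_mul_large (tx ty txy : C) :
  near_idem tx -> near_idem ty -> Cmod (Csub txy (Cmul tx ty)) <= d ->
  (1/2 <= Cmod txy <-> (1/2 <= Cmod tx /\ 1/2 <= Cmod ty)).
Proof.
  intros Hx Hy Hxy.
  destruct (near_idem_dichotomy tx Hx) as [Hx1 Hx2].
  destruct (near_idem_dichotomy ty Hy) as [Hy1 Hy2].
  pose proof (near_idem_bound tx Hx) as Bx. pose proof (near_idem_bound ty Hy) as By.
  pose proof (Cmod_ge0 tx). pose proof (Cmod_ge0 ty).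
  pose proof (Cmod_le_via txy (Cmul tx ty)) as Htxy. rewrite Cmod_mul in Htxy.
  split.
  - intros Hc. split; apply Rnot_lt_le; intros Hn.
    + specialize (Hx2 Hn).
      assert (Cmod tx * Cmod ty <= 2 * d * (1 + 2 * d)) by (apply Rmult_le_compat; auto).
      nra.
    + specialize (Hy2 Hn).
      assert (Cmod tx * Cmod ty <= (1 + 2 * d) * (2 * d)) by (apply Rmult_le_compat; auto).
      nra.
  - intros [Ha Hb]. specialize (Hx1 Ha). specialize (Hy1 Hb).
    assert (E : Cmod (Csub (Cmul tx ty) Cone) <=
                Cmod tx * Cmod (Csub ty Cone) + Cmod (Csub tx Cone)).
    { replace (Csub (Cmul tx ty) Cone) with
        (Cadd (Cmul tx (Csub ty Cone)) (Csub tx Cone)) by C_ring.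
      rewrite <- Cmod_mul. apply Cmod_add. }
    assert (Cmod tx * Cmod (Csub ty Cone) <= (1 + 2 * d) * (2 * d))
      by (apply Rmult_le_compat; auto; apply Cmod_ge0).
    pose proof (Cmod_sub_tri txy (Cmul tx ty) Cone).
    pose proof (Cmod_le_via Cone txy) as Hv. rewrite Cmod_Cone, Cmod_sub_sym in Hv.
    nra.
Qed.

Definition round01 (z : C) : C :=
  if excluded_middle_informative (1/2 <= Cmod z) then Cone else C0.

Lemma round01_bound (z : C) : Cmod (round01 z) <= 1.
Proof.
  unfold round01; destruct (excluded_middle_informative _);
    [rewrite Cmod_Cone|rewrite Cmod_C0]; lra.
Qed.

Lemma round01_close (t : C) : near_idem t -> Cmod (Csub t (round01 t)) <= 2 * d.
Proof.
  intros H. destruct (near_idem_dichotomy t H) as [H1 H2].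
  unfold round01; destruct (excluded_middle_informative _) as [Hge|Hlt]; auto.
  replace (Csub t C0) with t by C_ring. apply H2; lra.
Qed.

Lemma round01_mul (tx ty txy : C) :
  near_idem tx -> near_idem ty -> Cmod (Csub txy (Cmul tx ty)) <= d ->
  round01 txy = Cmul (round01 tx) (round01 ty).
Proof.
  intros Hx Hy Hxy. pose proof (near_idem_mul_large tx ty txy Hx Hy Hxy).
  unfold round01.
  destruct (excluded_middle_informative (1/2 <= Cmod txy));
  destruct (excluded_middle_informative (1/2 <= Cmod tx));
  destruct (excluded_middle_informative (1/2 <= Cmod ty)); try tauto; C_ring.
Qed.

End NearIdempotents.

(** * The multiplicative functional induced by a bounded semicharacter *)
Section Semicharacter.
Context {S : Type} (op : S -> S -> S) (chi : S -> C).
Hypothesis chi_mul : forall x y, chi (op x y) = Cmul (chi x) (chi y).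
Hypothesis chi_bound : forall x, Cmod (chi x) <= 1.

Definition char_functional (a : S -> C) : C :=
  epsilon (inhabits C0)
    (fun v => has_sum (fun _ : S => True) (fun s => Cmul (chi s) (a s)) v).

Lemma char_weights_abs (P : S -> Prop) (a : S -> C) (r : R) :
  l1_le a r -> abs_sums_le P (fun s => Cmul (chi s) (a s)) r.
Proof.
  intros Ha F HF _. eapply Rle_trans; [|apply (Ha F HF)]. apply lsumR_le. intros s.
  rewrite Cmod_mul. pose proof (chi_bound s). pose proof (Cmod_ge0 (a s)). nra.
Qed.

Lemma char_functional_spec (a : S -> C) (r : R) :
  l1_le a r -> has_sum (fun _ => True) (fun s => Cmul (chi s) (a s)) (char_functional a).
Proof.
  intros Ha. unfold char_functional. apply epsilon_spec.
  eapply has_sum_exists, char_weights_abs, Ha.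
Qed.

Lemma char_functional_eq (a : S -> C) (v : C) :
  has_sum (fun _ => True) (fun s => Cmul (chi s) (a s)) v -> char_functional a = v.
Proof. apply epsilon_has_sum. Qed.

Lemma char_functional_bound (a : S -> C) (r : R) :
  l1_le a r -> Cmod (char_functional a) <= r.
Proof.
  intros Ha. apply (has_sum_bound _ _ _ _ (char_functional_spec a r Ha)).
  apply char_weights_abs, Ha.
Qed.

Lemma char_functional_linear : is_linear_l1 char_functional.
Proof.
  split.
  - intros a b [ra Ha] [rb Hb]. apply char_functional_eq.
    eapply has_sum_ext;
      [|apply (has_sum_add _ _ _ _ _ (char_functional_spec a ra Ha)
                                     (char_functional_spec b rb Hb))].
    intros s _. unfold fadd. C_ring.
  - intros z a [ra Ha]. apply char_functional_eq.
    eapply has_sum_ext; [|apply (has_sum_scal _ _ _ z (char_functional_spec a ra Ha))].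
    intros s _. unfold fscale. C_ring.
Qed.

(* Multiplicativity: regroup the product of the sums for [a] and [b] along the fibres
   of [op], on which [chi (x y) = chi x chi y] is constant. *)
Lemma char_functional_mult (a b : S -> C) : in_l1 a -> in_l1 b ->
  char_functional (conv op a b) = Cmul (char_functional a) (char_functional b).
Proof.
  intros [ra Ha] [rb Hb]. apply char_functional_eq.
  apply (has_sum_regroup (fun p : S * S => op (fst p) (snd p))
    (fun p => Cmul (Cmul (chi (fst p)) (a (fst p))) (Cmul (chi (snd p)) (b (snd p))))).
  - intros j.
    assert (Hc : has_sum (fun p : S * S => op (fst p) (snd p) = j)
                   (fun p => Cmul (a (fst p)) (b (snd p))) (conv op a b j)).
    { unfold conv. apply epsilon_spec. apply (has_sum_exists _ _ (ra * rb)).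
      apply abs_sums_le_pair; intros F HF _; [apply Ha|apply Hb]; exact HF. }
    apply (has_sum_scal _ _ _ (chi j)) in Hc.
    eapply has_sum_ext; [|exact Hc].
    intros p Hp. rewrite <- Hp, chi_mul. C_ring.
  - exact (has_sum_prod (fun s => Cmul (chi s) (a s)) (fun s => Cmul (chi s) (b s)) _ _ ra rb
      (char_weights_abs _ a ra Ha) (char_weights_abs _ b rb Hb)
      (char_functional_spec a ra Ha) (char_functional_spec b rb Hb)).
Qed.

Lemma char_functional_is_mult : is_mult op char_functional.
Proof.
  split; [split|].
  - apply char_functional_linear.
  - exists 1. intros a Ha. apply (char_functional_bound a 1 Ha).
  - apply char_functional_mult.
Qed.

Lemma char_functional_dirac (x : S) : char_functional (dirac x Cone) = chi x.
Proof.
  apply char_functional_eq. apply (has_sum_ext _ (dirac x (chi x))).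
  - intros s _. unfold dirac. destruct (deq s x) as [->|]; C_ring.
  - apply has_sum_dirac_in; auto.
Qed.

End Semicharacter.

(** * Bounded functionals are controlled by their values on point masses *)
Section PointMassValues.
Context {S : Type}.

Definition restrict (L : list S) (a : S -> C) : S -> C :=
  fun s => if excluded_middle_informative (In s L) then a s else C0.
Definition restrict_out (L : list S) (a : S -> C) : S -> C :=
  fun s => if excluded_middle_informative (In s L) then C0 else a s.

Lemma restrict_split (L : list S) (a : S -> C) :
  a = fadd (restrict L a) (restrict_out L a).
Proof.
  apply functional_extensionality; intros s. unfold fadd, restrict, restrict_out.
  destruct (excluded_middle_informative (In s L)); C_ring.
Qed.

Lemma restrict_l1 (L : list S) (a : S -> C) (r : R) : l1_le a r -> l1_le (restrict L a) r.
Proof.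
  apply l1_le_mono. intros s. unfold restrict.
  destruct (excluded_middle_informative _); [lra|rewrite Cmod_C0; apply Cmod_ge0].
Qed.

Lemma restrict_out_l1 (L : list S) (a : S -> C) (r : R) :
  (forall G, NoDup G -> (forall s, In s G -> ~ In s L) ->
     lsumR (fun s => Cmod (a s)) G <= r) ->
  l1_le (restrict_out L a) r.
Proof.
  intros Htail G HG.
  set (outside := fun s => if excluded_middle_informative (In s L) then false else true).
  rewrite (lsumR_filter _ outside).
  - rewrite (lsumR_ext _ (fun s => Cmod (a s))).
    + apply Htail; [apply NoDup_filter; auto|].
      intros s Hs. apply filter_In in Hs. unfold outside in Hs.
      destruct (excluded_middle_informative (In s L)); [discriminate (proj2 Hs)|auto].
    + intros s Hs. apply filter_In in Hs. unfold outside, restrict_out in *.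
      destruct (excluded_middle_informative (In s L)); [discriminate (proj2 Hs)|auto].
  - intros s Hs. unfold outside, restrict_out in *.
    destruct (excluded_middle_informative (In s L)); [apply Cmod_C0|discriminate].
Qed.

Lemma restrict_cons (x : S) (L : list S) (a : S -> C) : ~ In x L ->
  restrict (x :: L) a = fadd (dirac x (a x)) (restrict L a).
Proof.
  intros Hx. apply functional_extensionality; intros s. unfold restrict, fadd, dirac.
  destruct (deq s x) as [->|Hne].
  - destruct (excluded_middle_informative (In x (x :: L))) as [_|Hn]; [|simpl in Hn; tauto].
    destruct (excluded_middle_informative (In x L)); [contradiction|C_ring].
  - destruct (excluded_middle_informative (In s (x :: L))) as [[E|Hin]|Hn];
      [congruence| |];
      destruct (excluded_middle_informative (In s L)); simpl in *; try tauto; C_ring.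
Qed.

Lemma linear_zero (psi : (S -> C) -> C) : is_linear_l1 psi -> psi (fun _ => C0) = C0.
Proof.
  intros [_ Hscal].
  replace (fun _ : S => C0) with (fscale C0 (fun _ : S => C0))
    by (apply functional_extensionality; intros; unfold fscale; C_ring).
  rewrite Hscal; [C_ring|exists 1; apply l1_le_zero; lra].
Qed.

Lemma linear_restrict (psi : (S -> C) -> C) (L : list S) (a : S -> C) :
  is_linear_l1 psi -> in_l1 a -> NoDup L ->
  psi (restrict L a) = lsum (fun x => Cmul (a x) (psi (dirac x Cone))) L.
Proof.
  intros Hpsi [r Ha] HL. destruct Hpsi as [Hadd Hscal].
  induction HL as [|x L Hx HL IH].
  - replace (restrict nil a) with (fun _ : S => C0).
    + apply linear_zero; split; auto.
    + apply functional_extensionality; intros s. unfold restrict.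
      destruct (excluded_middle_informative (In s nil)); [contradiction|auto].
  - rewrite restrict_cons, Hadd by (auto; eexists; eauto using l1_le_dirac, restrict_l1).
    rewrite <- fscale_dirac, Hscal by (exists 1; rewrite <- Cmod_Cone; apply l1_le_dirac).
    rewrite IH. reflexivity.
Qed.

Lemma bounded_scale (psi : (S -> C) -> C) (M r : R) (a : S -> C) :
  is_linear_l1 psi -> (forall b, l1_le b 1 -> Cmod (psi b) <= M) ->
  0 < r -> l1_le a r -> Cmod (psi a) <= r * M.
Proof.
  intros [_ Hscal] HM Hr Ha.
  set (b := fscale (mkC (/ r) 0) a).
  assert (Hb : l1_le b 1).
  { intros G HG. unfold b, fscale.
    rewrite (lsumR_ext _ (fun s => / r * Cmod (a s))).
    - rewrite lsumR_scal. pose proof (Ha G HG).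
      apply Rle_trans with (/ r * r); [|right; field; lra].
      apply Rmult_le_compat_l; [left; apply Rinv_0_lt_compat|]; auto.
    - intros s _. rewrite Cmod_mul, Cmod_real, Rabs_pos_eq; auto.
      left; apply Rinv_0_lt_compat; auto. }
  replace a with (fscale (mkC r 0) b)
    by (apply functional_extensionality; intros s; unfold b, fscale;
        apply C_ext; simpl; field; lra).
  rewrite Hscal by (exists 1; auto).
  rewrite Cmod_mul, Cmod_real, Rabs_pos_eq by lra.
  pose proof (HM b Hb). nra.
Qed.

(* Two bounded functionals that are [c]-close on all point masses are [(c + eta)]-close
   on the unit ball, for every [eta > 0]: split [a] into a finitely supported part,
   handled by linearity, and a tail of norm at most [eta / (M + M' + 1)]. *)
Lemma dual_dist_le_of_dirac (psi phi : (S -> C) -> C) (c : R) :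
  in_dual psi -> in_dual phi -> 0 <= c ->
  (forall x, Cmod (Csub (psi (dirac x Cone)) (phi (dirac x Cone))) <= c) ->
  forall eta, 0 < eta -> dual_dist_le psi phi (c + eta).
Proof.
  intros [Lpsi [M HM]] [Lphi [M' HM']] Hc Hpts eta Heta a Ha.
  assert (HM0 : 0 <= M)
    by (pose proof (HM _ (l1_le_zero 1 ltac:(lra))); pose proof (Cmod_ge0 (psi (fun _ => C0))); lra).
  assert (HM'0 : 0 <= M')
    by (pose proof (HM' _ (l1_le_zero 1 ltac:(lra))); pose proof (Cmod_ge0 (phi (fun _ => C0))); lra).
  set (r := eta / (M + M' + 1)).
  assert (Hr : 0 < r) by (apply Rdiv_lt_0_compat; lra).
  assert (Hreta : r * M + r * M' <= eta).
  { assert (r * (M + M' + 1) = eta) by (unfold r; field; lra). nra. }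
  destruct (l1_tail_small a 1 r Ha Hr) as [F0 [HF0 Htail]].
  pose proof (restrict_l1 F0 a 1 Ha) as Hfin.
  pose proof (restrict_out_l1 F0 a r Htail) as Hout.
  assert (Hfin_close : Cmod (Csub (psi (restrict F0 a)) (phi (restrict F0 a))) <= c).
  { rewrite !linear_restrict by (auto; exists 1; auto).
    rewrite <- lsum_sub. eapply Rle_trans; [apply lsum_Cmod|].
    apply Rle_trans with (lsumR (fun x => c * Cmod (a x)) F0).
    - apply lsumR_le. intros x.
      replace (Csub (Cmul (a x) (psi (dirac x Cone))) (Cmul (a x) (phi (dirac x Cone))))
        with (Cmul (a x) (Csub (psi (dirac x Cone)) (phi (dirac x Cone)))) by C_ring.
      rewrite Cmod_mul. pose proof (Hpts x). pose proof (Cmod_ge0 (a x)). nra.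
    - rewrite lsumR_scal. pose proof (Ha F0 HF0). nra. }
  pose proof (bounded_scale psi M r _ Lpsi HM Hr Hout).
  pose proof (bounded_scale phi M' r _ Lphi HM' Hr Hout).
  pose proof (Cmod_sub_le (psi (restrict_out F0 a)) (phi (restrict_out F0 a))).
  rewrite (restrict_split F0 a), (proj1 Lpsi), (proj1 Lphi) by (eexists; eauto).
  replace (Csub (Cadd (psi (restrict F0 a)) (psi (restrict_out F0 a)))
                (Cadd (phi (restrict F0 a)) (phi (restrict_out F0 a)))) with
    (Cadd (Csub (psi (restrict F0 a)) (phi (restrict F0 a)))
          (Csub (psi (restrict_out F0 a)) (phi (restrict_out F0 a)))) by C_ring.
  eapply Rle_trans; [apply Cmod_add|]. lra.
Qed.

End PointMassValues.

Lemma defect_on_dirac {S : Type} (op : S -> S -> S) (psi : (S -> C) -> C) (d : R) :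
  defect_le op psi d -> forall x y,
  Cmod (Csub (psi (dirac (op x y) Cone)) (Cmul (psi (dirac x Cone)) (psi (dirac y Cone))))
    <= d.
Proof.
  intros Hdef x y. rewrite <- conv_dirac.
  apply Hdef; rewrite <- Cmod_Cone; apply l1_le_dirac.
Qed.

(* With [d = min (eps/2) (1/20)]: the values [t x = psi (delta_x)] are d-nearly
   idempotent since [x x = x]; their rounding [chi] is a semicharacter with
   [|t - chi| <= 2 d <= eps], and [char_functional chi] is the required element of
   Mult(ell^1(S), C). *)
Theorem theoremt (S : Type) (op : S -> S -> S) (hS : is_semilattice op) :
  l1_AMNM op.
Proof.
  intros eps Heps. destruct hS as [_ [_ op_idem]].
  set (d := Rmin (eps / 2) (1 / 20)).
  assert (Hd : 0 < d) by (apply Rmin_pos; lra).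
  assert (Hd_eps : d <= eps / 2) by apply Rmin_l.
  assert (Hd_small : d <= 1 / 20) by apply Rmin_r.
  exists d; split; [exact Hd|].
  intros psi Hpsi Hdef eta Heta.
  set (t := fun x => psi (dirac x Cone)).
  assert (Ht : forall x y, Cmod (Csub (t (op x y)) (Cmul (t x) (t y))) <= d)
    by exact (defect_on_dirac op psi d Hdef).
  assert (Hidem : forall x, near_idem d (t x))
    by (intros x; unfold near_idem; rewrite <- (op_idem x) at 1; apply Ht).
  set (chi := fun x => round01 (t x)).
  assert (chi_mul : forall x y, chi (op x y) = Cmul (chi x) (chi y))
    by (intros x y; apply (round01_mul d); auto; lra).
  pose proof (char_functional_is_mult op chi chi_mul (fun x => round01_bound (t x))) as Hphi.
  exists (char_functional chi). split; [exact Hphi|].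
  apply dual_dist_le_of_dirac; [exact Hpsi|apply Hphi|lra| |exact Heta].
  intros x. rewrite char_functional_dirac.
  change (Cmod (Csub (t x) (round01 (t x))) <= eps).
  pose proof (round01_close d (t x) (Hidem x)). lra.
Qed.
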